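(* Let $\Gamma$ be a finite bipartite graph with $|V(\Gamma)|\geq 4$. The following are equivalent: (1) $P_5\not\leq\Gamma$ and $\Gamma$ is prime; (2) $\Gamma$ is critical; (3) $\Gamma$ is a half graph.
   Context: $P_5$ is the path on 5 vertices; $G\leq H$ means $G$ is isomorphic to an induced subgraph of $H$. A module of a graph is a set $M$ of vertices such that every vertex outside $M$ is adjacent to all or none of $M$; $\emptyset$, $V(\Gamma)$ and singletons are trivial; $\Gamma$ is prime if $|V(\Gamma)|\geq3$ and all modules are trivial; a prime graph is critical if $\Gamma-v$ is not prime for every vertex $v$. A bipartite graph with bipartition $\{X,Y\}$ is a half graph if there exist a linear order $L$ on $X$ and a bijection $\varphi:X\to Y$ with $E(\Gamma)=\{\{x,\varphi(x')\}: x\leq x'\bmod L\}$. *)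

(* A finite simple graph is a symmetric irreflexive relation
   e : rel T on a finType T; its vertex set is [set: T]. *)
From mathcomp Require Import all_boot.
Set Implicit Arguments. Unset Strict Implicit. Unset Printing Implicit Defensive.

Section Graphs.
Variable T : finType.
Variable e : rel T.

Definition simple_graph : Prop := symmetric e /\ irreflexive e.

Definition bipartite : Prop :=
  exists X : {set T}, forall u v, e u v -> (u \in X) != (v \in X).

Definition module_on (S M : {set T}) : Prop :=
  M \subset S /\
  forall v, v \in S :\: M ->
    (forall m, m \in M -> e v m) \/ (forall m, m \in M -> ~~ e v m).

Definition trivial_module_on (S M : {set T}) : Prop :=
  M = set0 \/ M = S \/ #|M| = 1.

Definition prime_on (S : {set T}) : Prop :=
  3 <= #|S| /\ forall M : {set T}, module_on S M -> trivial_module_on S M.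

Definition prime_graph : Prop := prime_on [set: T].

Definition critical : Prop :=
  prime_graph /\ forall v : T, ~ prime_on ([set: T] :\ v).

Definition path_adj (n : nat) : rel 'I_n := fun i j => (i.+1 == j) || (j.+1 == i).

Definition induced_sub (U : finType) (g : rel U) : Prop :=
  exists f : U -> T, injective f /\ forall i j, e (f i) (f j) = g i j.

Definition contains_P5 : Prop := induced_sub (@path_adj 5).

Definition linear_order_on (X : {set T}) (L : rel T) : Prop :=
  {in X, reflexive L} /\
  {in X &, antisymmetric L} /\
  {in X & X & X, forall x y z, L x y -> L y z -> L x z} /\
  {in X &, total L}.

Definition half_graph : Prop :=
  exists (X : {set T}) (L : rel T) (phi : T -> T),
    linear_order_on X L /\
    {in X &, injective phi} /\
    (forall x, x \in X -> phi x \in ~: X) /\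
    (forall y, y \in ~: X -> exists2 x, x \in X & phi x = y) /\
    (forall u v, e u v <->
       exists x x', [/\ x \in X, x' \in X, L x x' &
         ((u = x /\ v = phi x') \/ (u = phi x' /\ v = x))]).

End Graphs.

From mathcomp Require Import all_boot zify.
From Stdlib Require Import Classical.
Set Implicit Arguments. Unset Strict Implicit. Unset Printing Implicit Defensive.

(* Call a bipartite graph nested when any two vertices on the same side have
   comparable neighbourhoods. A prime nested graph is a half graph: primeness
   makes the neighbourhoods on one side X distinct, inclusion orders X, and
   phi x is the vertex whose neighbourhood is {x' in X | N(x) <= N(x')}.
   Conversely a half graph is nested, prime (a nontrivial module would meet both
   sides and be closed under adjacency) and critical (deleting a vertex leaves
   twins or an isolated vertex).
   An induced P5 contains two vertices on the same side with incomparable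
   neighbourhoods; conversely, in a prime P5-free graph two vertices with a
   common neighbour are comparable and a vertex of maximal degree sees the whole
   other side, so the graph is nested.
   A critical graph is nested by induction. Some Gamma - v is disconnected, as
   otherwise each v splits a pair of twins of Gamma - v, which a counting
   argument rules out; a smallest component is a leaf l, with neighbour u.
   Then l splits u from a twin u' in Gamma - l, some z has neighbourhood
   {u, u'}, Gamma - {l, u} is critical again, and nestedness lifts back. *)

(* Induction on |R|: c splits R into its neighbours and its non-neighbours, and
   every other d in L has both f d and g d on the same side of that split. *)
Lemma splitting_card_lt (T : finType) (e : rel T) (L R : {set T}) (f g : T -> T) :
  (forall c, c \in L -> [/\ f c \in R, g c \in R, e (f c) c, ~~ e (g c) c &
     forall d, d \in L -> d != c -> e (f c) d = e (g c) d]) ->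
  R != set0 -> #|L| < #|R|.
Proof.
have [n] := ubnP #|R|; elim: n L R => // n IH L R ltRn H R0.
have [-> | /set0Pn[c cL]] := eqVneq L set0; first by rewrite cards0 card_gt0.
have [fR gR efc egc _] := H c cL.
set R1 := R :&: [set r | e r c]; set R2 := R :\: [set r | e r c].
have f1 : f c \in R1 by rewrite !inE fR efc.
have g2 : g c \in R2 by rewrite !inE gR egc.
have CR := cardsID [set r | e r c] R; rewrite -/R1 -/R2 in CR.
have R1p : 0 < #|R1| by rewrite card_gt0; apply/set0Pn; exists (f c).
have R2p : 0 < #|R2| by rewrite card_gt0; apply/set0Pn; exists (g c).
set Q := [set d | f d \in R1].
have CL := cardsID Q (L :\ c); have CL' := cardsD1 c L; rewrite cL in CL'.
have HL1 : #|(L :\ c) :&: Q| < #|R1|.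
  apply: IH; [lia | | by apply/set0Pn; exists (f c)].
  move=> d; rewrite !inE => /andP[/andP[dc dL] /andP[_ fdc]].
  have [fdR gdR efd egd Hd] := H d dL.
  split=> //; last by move=> d'; rewrite !inE => /andP[/andP[_ d'L] _]; apply: Hd.
    by rewrite fdR.
  by rewrite gdR /= -Hd // eq_sym.
have HL2 : #|(L :\ c) :\: Q| < #|R2|.
  apply: IH; [lia | | by apply/set0Pn; exists (g c)].
  move=> d; rewrite !inE => /andP[fd /andP[dc dL]].
  have [fdR gdR efd egd Hd] := H d dL; move: fd; rewrite fdR /= => fdc.
  split=> //; first by rewrite fdc.
    by rewrite gdR andbT -Hd // eq_sym.
  by move=> d'; rewrite !inE => /andP[_ /andP[_ d'L]]; apply: Hd.
lia.
Qed.

Lemma path_adj5_twin_free (i j : 'I_5) :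
  (forall k, path_adj i k = path_adj j k) -> i = j.
Proof.
move=> H; apply/eqP.
move: (H (@Ordinal 5 0 isT)) (H (@Ordinal 5 1 isT)) (H (@Ordinal 5 2 isT))
  (H (@Ordinal 5 3 isT)) (H (@Ordinal 5 4 isT)); clear H.
by case: i j => [[|[|[|[|[|?]]]]] ?] [[|[|[|[|[|?]]]]] ?].
Qed.

Lemma linear_order_dual (T : finType) (D : {set T}) (R : rel T) :
  linear_order_on D R -> linear_order_on D (fun x y => R y x).
Proof.
case=> refl [anti [trans tot]]; split=> [x /refl // | ]; split=> [x y xD yD /andP[Ryx Rxy] | ].
  by apply: anti; rewrite // Rxy.
split=> [y x z yD xD zD Rxy Ryz | x y xD yD]; first exact: trans Ryz Rxy.
by rewrite orbC; apply: tot.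
Qed.

Lemma linear_order_onS (T : finType) (A D : {set T}) (R : rel T) :
  A \subset D -> linear_order_on D R -> linear_order_on A R.
Proof.
move=> /subsetP sAD [refl [anti [trans tot]]]; split; [|split; [|split]].
- by move=> x /sAD; apply: refl.
- by move=> x y /sAD xD /sAD yD; apply: anti.
- by move=> x y z /sAD xD /sAD yD /sAD zD; apply: trans.
- by move=> x y /sAD xD /sAD yD; apply: tot.
Qed.

Lemma linear_order_max (T : finType) (D : {set T}) (R : rel T) : D != set0 ->
  linear_order_on D R -> exists2 m, m \in D & forall z, z \in D -> R z m.
Proof.
move=> /set0Pn[d dD] [refl [_ [trans tot]]].
case: (arg_maxnP (fun m => #|[set z in D | R z m]|) dD) => m mD Hmax.
exists m => // z zD; apply: contraT => nRzm.
have Rmz : R m z by move: (tot m z mD zD); rewrite (negbTE nRzm) orbF.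
have : [set y in D | R y m] \proper [set y in D | R y z].
  rewrite properE; apply/andP; split.
    apply/subsetP => y; rewrite !inE => /andP[yD Rym]; rewrite yD /=.
    exact: trans Rym Rmz.
  apply/negP => /subsetP/(_ z); rewrite !inE zD refl //= => /(_ isT).
  by rewrite (negbTE nRzm).
have le : #|[set y in D | R y z]| <= #|[set y in D | R y m]| := Hmax z zD.
by move/proper_card; rewrite ltnNge le.
Qed.

Lemma linear_order_pred (T : finType) (D : {set T}) (R : rel T) x :
  linear_order_on D R -> x \in D ->
  (forall z, z \in D -> R x z) \/
  exists p, [/\ p \in D, p != x, R p x & forall z, z \in D -> z != x -> R z x -> R z p].
Proof.
move=> ordR xD; have [refl [_ [trans tot]]] := ordR.
pose B := [set z in D | (z != x) && R z x].
have [B0 | B0] := eqVneq B set0.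
  left => z zD; have [-> | zx] := eqVneq z x; first exact: refl.
  have : z \notin B by rewrite B0 inE.
  rewrite !inE zD zx /= => nRzx.
  by move: (tot x z xD zD); rewrite (negbTE nRzx) orbF.
have sBD : B \subset D by apply/subsetP => z; rewrite inE => /andP[].
have [p pB Hp] := linear_order_max B0 (linear_order_onS sBD ordR).
right; exists p; move: (pB); rewrite !inE => /and3P[pD px Rpx]; split=> //.
by move=> z zD zx Rzx; apply: Hp; rewrite !inE zD zx.
Qed.

Section Graph.
Variables (T : finType) (e : rel T).
Hypotheses (e_sym : symmetric e) (e_irr : irreflexive e).
Implicit Types (S M A C : {set T}) (u v : T).

Definition closed_on S M :=
  M \subset S /\ forall p q, p \in M -> q \in S -> q \notin M -> ~~ e p q.

Definition cut_on S v C := [/\ v \in S, closed_on (S :\ v) C, C != set0 & C != S :\ v].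

Definition splits_on S v a b :=
  [/\ a \in S :\ v, b \in S :\ v, e a v, ~~ e b v &
      forall c, c \in S :\ v -> e a c = e b c].

Definition critical_on S := prime_on e S /\ forall v, v \in S -> ~ prime_on e (S :\ v).

Definition nbhd v := [set w | e v w].

Definition pendant_at S v := [set p in S | [forall c in S, e p c == (c == v)]].

Lemma closed_onD S M : closed_on S M -> closed_on S (S :\: M).
Proof.
case=> sMS H; split; first exact: subsetDl.
move=> p q; rewrite !inE => /andP[pM pS] qS; rewrite qS andbT negbK => qM.
by rewrite e_sym; apply: H.
Qed.

Lemma closed_on_module S M : closed_on S M -> module_on e S M.
Proof.
case=> sMS H; split=> // v; rewrite inE => /andP[vM vS]; right=> m mM.
by rewrite e_sym; apply: H.
Qed.

Lemma module_closed_or_joined S M : module_on e S M ->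
  closed_on S M \/ exists2 c, c \in S :\: M & forall m, m \in M -> e c m.
Proof.
case=> sMS HM; case: (classic (exists2 c, c \in S :\: M & forall m, m \in M -> e c m)).
  by right.
move=> NC; left; split=> // p q pM qS qM.
have /HM [H|H] : q \in S :\: M by rewrite inE qM qS.
- by exfalso; apply: NC; exists q => //; rewrite inE qM qS.
- by rewrite e_sym; apply: H.
Qed.

Lemma prime_closed_on S M : prime_on e S -> closed_on S M -> M != set0 -> M = S.
Proof.
move=> [S3 HP] cM M0; have sMS : M \subset S by case: cM.
have C := cardsD S M; rewrite (setIidPr sMS) in C.
case: (HP _ (closed_on_module cM)) => [/eqP|[//|M1]]; first by rewrite (negbTE M0).
by case: (HP _ (closed_on_module (closed_onD cM))) => [|[|]] E;
  rewrite E ?cards0 M1 in C; lia.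
Qed.

Lemma not_prime_closed_on S M : closed_on S M -> M != set0 -> M != S -> ~ prime_on e S.
Proof. by move=> cM M0 MS PS; move: MS; rewrite (prime_closed_on PS cM M0) eqxx. Qed.

Lemma prime_nbr S p : prime_on e S -> p \in S -> exists2 q, q \in S & e p q.
Proof.
move=> PS pS; apply: NNPP => H.
have cp : closed_on S [set p].
  split=> [|a q]; first by rewrite sub1set.
  by rewrite inE => /eqP -> qS _; apply/negP => epq; apply: H; exists q.
have E : [set p] = S by apply: (prime_closed_on PS cp); apply/set0Pn; exists p; rewrite inE.
by case: PS; rewrite -E cards1.
Qed.

Lemma prime_pendant S p v : prime_on e S -> p \in S ->
  (forall q, q \in S -> e p q -> q = v) -> forall c, c \in S -> e p c = (c == v).
Proof.
move=> PS pS nb; have [q qS epq] := prime_nbr PS pS.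
by move=> c cS; apply/idP/eqP => [/(nb c cS) // | ->]; rewrite -(nb q qS epq).
Qed.

Lemma prime_no_twins S a b : prime_on e S -> a \in S -> b \in S -> a != b ->
  (forall c, c \in S -> c != a -> c != b -> e a c = e b c) -> False.
Proof.
move=> [S3 HP] aS bS ab H.
have mM : module_on e S [set a; b].
  split; first by apply/subsetP => x; rewrite !inE => /orP[]/eqP->.
  move=> v; rewrite !inE negb_or => /andP[/andP[va vb] vS].
  have Hv : e v b = e v a by rewrite e_sym -H // e_sym.
  by case E: (e v a); [left | right] => m; rewrite !inE => /orP[]/eqP->; rewrite ?Hv ?E.
case: (HP _ mM) => [/setP/(_ a)|[E|]]; rewrite ?cards2 ?ab //.
- by rewrite !inE eqxx.
- by move: S3; rewrite -E cards2 ab.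
Qed.

Lemma pendant_at_card S v : prime_on e S -> #|pendant_at S v| <= 1.
Proof.
move=> PS; apply/card_le1_eqP => p p'.
rewrite !inE => /andP[pS /forallP Hp] /andP[p'S /forallP Hp'].
apply/eqP; apply: contraT => pp'; exfalso; apply: (prime_no_twins PS p'S pS pp') => c cS _ _.
by move: (Hp c) (Hp' c); rewrite cS /= => /eqP -> /eqP ->.
Qed.

Lemma isolated_not_prime S x : x \in S -> 1 < #|S| ->
  (forall y, y \in S -> ~~ e x y) -> ~ prime_on e S.
Proof.
move=> xS S2 nx; apply: (@not_prime_closed_on S [set x]).
- by split=> [|p q]; rewrite ?sub1set // inE => /eqP-> qS _; apply: nx.
- by apply/set0Pn; exists x; rewrite inE.
- by apply/eqP => E; move: S2; rewrite -E cards1.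
Qed.

Lemma closed_on_avoid S M u : closed_on S M -> M != set0 -> M != S -> u \in S ->
  exists A, [/\ closed_on S A, A != set0 & u \notin A].
Proof.
move=> cM M0 MS uS; have [uM|uM] := boolP (u \in M); last by exists M.
exists (S :\: M); split; [exact: closed_onD | | by rewrite inE uM].
apply: contraNneq MS => /eqP; rewrite setD_eq0 => sSM.
by rewrite eqEsubset sSM andbT; case: cM.
Qed.

Lemma cut_onS S v C p : cut_on S v C -> p \in C -> p \in S /\ p != v.
Proof. by case=> _ [/subsetP sC _] _ _ /sC; rewrite !inE => /andP[-> ->]. Qed.

Lemma cut_nonadj S v C p q : cut_on S v C -> p \in C -> q \in S -> q != v ->
  q \notin C -> ~~ e p q.
Proof. by case=> _ [_ cl] _ _ pC qS qv; apply: cl; rewrite // !inE qv. Qed.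

Lemma cut_onD S v C : cut_on S v C -> cut_on S v ((S :\ v) :\: C).
Proof.
move=> [vS cC C0 CS]; split=> //; first exact: closed_onD.
  apply: contraNneq CS => /eqP; rewrite setD_eq0 => sSC.
  by rewrite eqEsubset sSC andbT; case: cC.
case/set0Pn: C0 => x xC; apply/eqP => E.
have : x \in S :\ v by case: cC => sC _; exact: subsetP sC x xC.
by rewrite -E inE xC.
Qed.

Lemma cut_nbr S v C : prime_on e S -> cut_on S v C -> exists2 x, x \in C & e v x.
Proof.
move=> PS cutC; have [vS _ C0 _] := cutC; apply: NNPP => nx.
suff cCS : closed_on S C.
  have /(cut_onS cutC)[_] : v \in C by rewrite (prime_closed_on PS cCS C0).
  by rewrite eqxx.
split=> [|p q pC qS qC]; first by apply/subsetP => p /(cut_onS cutC)[].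
have [-> | qv] := eqVneq q v; last exact: cut_nonadj cutC pC qS qv qC.
by apply/negP => epv; apply: nx; exists p; rewrite // e_sym.
Qed.

Lemma cut_singleton_leaf S v p : prime_on e S -> cut_on S v [set p] ->
  forall c, c \in S -> e p c = (c == v).
Proof.
move=> PS cutp; have [pS _] := cut_onS cutp (set11 p).
apply: prime_pendant PS pS _ => q qS epq; apply/eqP/negPn/negP => qv.
have qp : q \notin [set p] by rewrite inE; apply: contraTneq epq => ->; rewrite e_irr.
by rewrite (negbTE (cut_nonadj cutp (set11 p) qS qv qp)) in epq.
Qed.

Lemma cut_shrink S v C x0 : cut_on S v C -> x0 \in C ->
  (forall x, x \in C -> e v x -> x = x0) -> 1 < #|C| -> cut_on S x0 (C :\ x0).
Proof.
move=> cutC x0C only C2; have [vS _ _ _] := cutC; have [x0S _] := cut_onS cutC x0C.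
split=> //.
- split=> [|p q]; first by apply/subsetP => x; rewrite !inE => /andP[-> /(cut_onS cutC)[->]].
  rewrite !inE => /andP[px0 pC] /andP[qx0 qS]; rewrite qx0 /= => qC.
  have [-> | qv] := eqVneq q v; last exact: cut_nonadj cutC pC qS qv qC.
  by apply/negP; rewrite e_sym => /(only p pC) /eqP; rewrite (negbTE px0).
- by rewrite -card_gt0 (cardsD1 x0 C) x0C in C2 *.
- have vC : v \notin C by apply/negP => /(cut_onS cutC)[_]; rewrite eqxx.
  have vx0 : v != x0 by apply: contraNneq vC => ->.
  by apply/eqP => /setP/(_ v); rewrite !inE vx0 vS (negbTE vC).
Qed.

(* A cut at v can be moved away from any vertex u; when every neighbour of v
   other than u is a neighbour of u, the part avoiding u is then closed in S. *)
Lemma no_cut_dominated S u v C : prime_on e S -> u \in S -> u != v ->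
  (forall c, c \in S -> c != u -> e v c -> e u c) -> ~ cut_on S v C.
Proof.
move=> PS uS uv Hdom [vS cC C0 CS].
have uSv : u \in S :\ v by rewrite !inE uv.
case: (closed_on_avoid cC C0 CS uSv) => A [[sA clA] A0 uA].
have AS p : p \in A -> p \in S /\ p != v by move/(subsetP sA); rewrite !inE => /andP[-> ->].
suff cAS : closed_on S A by move: uA; rewrite (prime_closed_on PS cAS A0) uS.
split=> [|p q pA qS qA]; first by apply/subsetP => p /AS[].
have [-> | qv] := eqVneq q v; last by apply: clA; rewrite // !inE qv.
have [pS _] := AS p pA; apply/negP => epv.
have pu : p != u by apply: contraNneq uA => <-.
by have /negP := clA p u pA uSv uA; apply; rewrite e_sym Hdom // e_sym.
Qed.

(* A cut at a vertex w of C can be chosen to avoid v; it either lies outside C,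
   and is then closed in S, or meets C in a cut smaller than C. *)
Lemma cut_inside_cut S v C w C' : prime_on e S -> cut_on S v C -> w \in C ->
  cut_on S w C' -> exists A, cut_on S w A /\ #|A| < #|C|.
Proof.
move=> PS cutC wC [wS cC' C0' CS']; have [vS _ _ _] := cutC; have [_ wv] := cut_onS cutC wC.
have vSw : v \in S :\ w by rewrite !inE eq_sym wv vS.
have [A [[sA clA] A0 vA]] := closed_on_avoid cC' C0' CS' vSw.
have AS p : p \in A -> p \in S /\ p != w by move/(subsetP sA); rewrite !inE => /andP[-> ->].
have Av p : p \in A -> p != v by apply: contraTneq => ->.
have [AC0 | AC0] := eqVneq (A :&: C) set0.
  suff cAS : closed_on S A.
    have /AS[_] : w \in A by rewrite (prime_closed_on PS cAS A0).
    by rewrite eqxx.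
  split=> [|p q pA qS qA]; first by apply/subsetP => p /AS[].
  have [-> | qw] := eqVneq q w; last by apply: clA; rewrite // !inE qw qS.
  have pC : p \notin C by apply/negP => pC; move/setP/(_ p): AC0; rewrite !inE pA pC.
  by rewrite e_sym; apply: (cut_nonadj cutC wC (AS p pA).1 (Av p pA) pC).
exists (A :&: C); split.
- split=> //.
  + split=> [|p q /setIP[pA pC] qSw]; first exact: subset_trans (subsetIl A C) sA.
    rewrite inE negb_and => /orP[qA | qC]; first exact: clA.
    have [qA | qA] := boolP (q \in A); last exact: clA.
    exact: cut_nonadj cutC pC (setD1P qSw).2 (Av q qA) qC.
  + by apply/eqP => E; move: vSw; rewrite -E inE (negbTE vA).
- have : #|A :&: C| <= #|C :\ w|.
    by apply: subset_leq_card; apply/subsetP => p; rewrite !inE => /andP[/AS[_ ->] ->].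
  by rewrite (cardsD1 w C) wC.
Qed.


Lemma splits_choice S A : (forall w, w \in A -> exists a b, splits_on S w a b) ->
  exists f g : T -> T, forall w, w \in A -> splits_on S w (f w) (g w).
Proof.
move=> H; have ex_ab w : exists ab : T * T, w \in A -> splits_on S w ab.1 ab.2.
  have [/H[a [b sab]] | _] := boolP (w \in A); first by exists (a, b).
  by exists (w, w).
have [fg Hfg] := fin_all_exists ex_ab.
by exists (fun w => (fg w).1), (fun w => (fg w).2).
Qed.

Section Bipartite.
Variable X : {set T}.
Hypothesis e_bip : forall u v, e u v -> (u \in X) != (v \in X).

Lemma edge_side u v : e u v -> (v \in X) = ~~ (u \in X).
Proof. by move/e_bip; case: (u \in X); case: (v \in X). Qed.

Lemma same_side_nonadj u v : (u \in X) = (v \in X) -> ~~ e u v.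
Proof. by move=> H; apply/negP => /e_bip; rewrite H eqxx. Qed.

Lemma common_nbr_side u v w : e u w -> e v w -> (u \in X) = (v \in X).
Proof.
by move=> /edge_side + /edge_side; case: (u \in X); case: (v \in X); case: (w \in X).
Qed.

Lemma joined_module_twins S M c a b : module_on e S M -> c \in S :\: M ->
  (forall m, m \in M -> e c m) -> a \in M -> b \in M ->
  forall d, d \in S -> e a d = e b d.
Proof.
move=> [_ HM] cM call aM bM d dS.
have side m : m \in M -> (m \in X) = ~~ (c \in X).
  by move=> mM; rewrite (edge_side (call m mM)).
have [dM | dM] := boolP (d \in M).
  have nadj m : m \in M -> e m d = false.
    by move=> mM; apply/negbTE/same_side_nonadj; rewrite (side m mM) (side d dM).
  by rewrite !nadj.
have /HM [H|H] : d \in S :\: M by rewrite inE dM dS.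
- by rewrite (e_sym a) (e_sym b) !H.
- by rewrite (e_sym a) (e_sym b) (negbTE (H _ aM)) (negbTE (H _ bM)).
Qed.

Lemma nonprime_deletion S v : prime_on e S -> v \in S -> 4 <= #|S| ->
  ~ prime_on e (S :\ v) -> (exists C, cut_on S v C) \/ exists a b, splits_on S v a b.
Proof.
move=> [_ PS] vS S4 NP.
have [M [modM nT]] : exists M, module_on e (S :\ v) M /\ ~ trivial_module_on (S :\ v) M.
  apply: NNPP => H; apply: NP; split; first by rewrite (cardsD1 v S) vS in S4.
  by move=> M mM; apply: NNPP => nT; apply: H; exists M.
have [M0 MS M1] : [/\ M != set0, M != S :\ v & #|M| != 1].
  by split; apply/eqP => E; apply: nT; rewrite /trivial_module_on E;
    [left | right; left | right; right].
case: (modM) => sM HM.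
have vM : v \notin M by apply/negP => /(subsetP sM); rewrite !inE eqxx.
have mixed : ~ (forall m, m \in M -> e v m) /\ ~ (forall m, m \in M -> ~~ e v m).
  suff NmS : ~ module_on e S M.
    have sMS : M \subset S := subset_trans sM (subD1set S v).
    split=> Hv; apply: NmS; split=> // w; rewrite inE => /andP[wM wS];
      have [-> | wv] := eqVneq w v; try by [left; exact: Hv | right; exact: Hv];
      by apply: HM; rewrite !inE wM wv wS.
  move=> mS; case: (PS _ mS) => [E|[E|E]]; last by rewrite E in M1.
  - by rewrite E eqxx in M0.
  - by rewrite E vS in vM.
have [a aM eva] : exists2 a, a \in M & e v a.
  apply: NNPP => H; apply: mixed.2 => x xM; apply/negP => evx; apply: H; by exists x.
have [b bM nevb] : exists2 b, b \in M & ~~ e v b.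
  apply: NNPP => H; apply: mixed.1 => x xM; apply/negPn/negP => nevx; apply: H; by exists x.
case: (module_closed_or_joined modM) => [cM | [c cM call]].
  by left; exists M; split.
right; exists a, b; split; rewrite ?(e_sym a) ?(e_sym b) //; try exact: (subsetP sM).
exact: (joined_module_twins modM cM call).
Qed.

Lemma splits_same_side S v a b : prime_on e S -> splits_on S v a b ->
  (a \in X) = ~~ (v \in X) /\ (b \in X) = ~~ (v \in X).
Proof.
move=> PS [aS bS eav nebv H].
have ha : (a \in X) = ~~ (v \in X) by rewrite (edge_side eav) negbK.
split=> //; have [q qS ebq] := prime_nbr PS (subsetP (subD1set S v) b bS).
have qv : q != v by apply: contraNneq nebv => <-.
have eaq : e a q by rewrite H // !inE qv.
by rewrite -(common_nbr_side eaq ebq).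
Qed.

(* Each side of C is split by the pairs chosen for the other side, so by
   splitting_card_lt it is smaller than the opposite side of C :|: Y. *)
Lemma splitting_pairs_escape S C Y (f g : T -> T) : prime_on e S -> C \subset S ->
  C != set0 ->
  (forall w, w \in C -> [/\ splits_on S w (f w) (g w), f w \in C & g w \in C :|: Y]) ->
  1 < #|Y|.
Proof.
move=> PS sCS /set0Pn[w0 w0C] H.
have side_lt (Z : {set T}) :
    (forall w, w \in C -> (f w \in Z) = ~~ (w \in Z) /\ (g w \in Z) = ~~ (w \in Z)) ->
    #|C :&: Z| < #|(C :|: Y) :&: ~: Z|.
  move=> sides; apply: (@splitting_card_lt _ e _ _ f g).
  - move=> c /setIP[cC cZ]; have [[_ _ efc negc Hc] fC gCY] := H c cC.
    have [sf sg] := sides c cC.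
    split=> //.
    + by rewrite !inE fC sf cZ.
    + by rewrite inE gCY inE sg cZ.
    + move=> d /setIP[dC _] dc; apply: Hc; rewrite !inE dc; exact: subsetP sCS d dC.
  - have [sf _] := sides w0 w0C; have [_ fC _] := H w0 w0C.
    apply/set0Pn; case: (boolP (w0 \in Z)) => w0Z; [exists (f w0) | exists w0];
      by rewrite !inE ?fC ?sf ?w0Z ?w0C.
have sidesX w : w \in C -> (f w \in X) = ~~ (w \in X) /\ (g w \in X) = ~~ (w \in X).
  by move=> wC; have [sp _ _] := H w wC; exact: splits_same_side PS sp.
have lt1 := side_lt X sidesX.
have lt2 : #|C :&: ~: X| < #|(C :|: Y) :&: ~: ~: X|.
  by apply: side_lt => w wC; rewrite !inE; have [-> ->] := sidesX w wC.
rewrite setCK in lt2.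
have := cardsID X C; have := cardsID X (C :|: Y); have := (leq_card_setU C Y).1.
rewrite !setDE; lia.
Qed.

(** * Critical graphs have a leaf *)

Section CriticalLeaf.
Variable S : {set T}.
Hypotheses (crit : critical_on S) (S4 : 4 <= #|S|).
Let PS : prime_on e S := crit.1.

Lemma critical_split v : v \in S -> (forall C, ~ cut_on S v C) ->
  exists a b, splits_on S v a b.
Proof.
move=> vS nocut.
by case: (nonprime_deletion PS vS S4 (crit.2 v vS)) => // [[C /nocut]].
Qed.

Lemma critical_has_cut : exists v C, cut_on S v C.
Proof.
apply: NNPP => nocut.
have [f [g Hfg]] : exists f g : T -> T, forall w, w \in S -> splits_on S w (f w) (g w).
  apply: splits_choice => w wS; apply: critical_split => // C cC.
  by apply: nocut; exists w, C.
suff : 1 < #|@set0 T| by rewrite cards0.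
apply: (splitting_pairs_escape PS (subxx S)); first by rewrite -card_gt0; lia.
move=> w wS; have [aS bS _ _ _] := Hfg w wS.
by rewrite setU0; split; [exact: Hfg | move: aS | move: bS]; rewrite inE => /andP[].
Qed.

Section MinimalCut.
Variables (v : T) (C : {set T}).
Hypotheses (cutC : cut_on S v C) (minC : forall w C', cut_on S w C' -> #|C| <= #|C'|).
Hypothesis C2 : 1 < #|C|.

Lemma mincut_two_nbrs w : w \in C -> exists2 c, c \in C & (c != w) && e v c.
Proof.
have [x0 x0C evx0] := cut_nbr PS cutC.
have [x1 [x1C x10 evx1]] : exists x1, [/\ x1 \in C, x1 != x0 & e v x1].
  apply: NNPP => nx1.
  have only x : x \in C -> e v x -> x = x0.
    by move=> xC evx; apply/eqP/negPn/negP => xx0; apply: nx1; exists x.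
  have := minC (cut_shrink cutC x0C only C2).
  by rewrite (cardsD1 x0 C) x0C ltnn.
move=> wC; have [-> | wx0] := eqVneq w x0; first by exists x1; rewrite ?x10.
by exists x0; rewrite // eq_sym wx0.
Qed.

Lemma mincut_splits w : w \in C -> exists a b, splits_on S w a b.
Proof.
move=> wC; have [wS _] := cut_onS cutC wC.
apply: critical_split => // C' cC'.
have [A [cA ltA]] := cut_inside_cut PS cutC wC cC'.
by have := minC cA; rewrite leqNgt ltA.
Qed.

Lemma mincut_split_fst w a b : w \in C -> splits_on S w a b -> a \in C.
Proof.
move=> wC [aS bS eaw nbw Hab].
have [d] := cut_nbr PS (cut_onD cutC); rewrite !inE => /and3P[dC dv dS] evd.
have [wS wv] := cut_onS cutC wC.
have dw : d != w by apply: contraNneq dC => ->.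
move: aS bS; rewrite !inE => /andP[aw aS] /andP[bw bS].
apply: contraT => aC.
have [av | av] := eqVneq a v; last by have := cut_nonadj cutC wC aS av aC; rewrite e_sym eaw.
have [c cC /andP[cw evc]] := mincut_two_nbrs wC.
have [cS _] := cut_onS cutC cC.
have ebc : e b c by rewrite -Hab ?av // !inE cw cS.
have ebd : e b d by rewrite -Hab ?av // !inE dw dS.
have [bC | bC] := boolP (b \in C).
  by have := cut_nonadj cutC bC dS dv dC; rewrite ebd.
have bv : b != v by apply: contraNneq nbw => ->; rewrite -av.
by have := cut_nonadj cutC cC bS bv bC; rewrite e_sym ebc.
Qed.

Lemma mincut_split_snd w a b : w \in C -> splits_on S w a b -> b \in C :|: pendant_at S v.
Proof.
move=> wC sp; have aC := mincut_split_fst wC sp; case: sp => aS bS eaw nbw Hab.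
have [d] := cut_nbr PS (cut_onD cutC); rewrite !inE => /and3P[dC dv dS] evd.
move: bS; rewrite !inE => /andP[bw bS]; rewrite bS /=.
have [// | bC] := boolP (b \in C).
have dw : d != w by apply: contraNneq dC => ->.
have bv : b != v.
  apply: contraTneq (cut_nonadj cutC aC dS dv dC) => bv.
  by rewrite negbK Hab ?bv // !inE dw dS.
have nbq q : q \in S -> e b q -> q = v.
  move=> qS ebq; apply/eqP/negPn/negP => qv.
  have [qC | qC] := boolP (q \in C).
    by have := cut_nonadj cutC qC bS bv bC; rewrite e_sym ebq.
  have qw : q != w by apply: contraNneq qC => ->.
  by have := cut_nonadj cutC aC qS qv qC; rewrite Hab ?ebq // !inE qw qS.
apply/forallP => c; apply/implyP => cS; apply/eqP.
exact: prime_pendant PS bS nbq c cS.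
Qed.

(* Every w in C splits a pair, which stays in C up to the at most one pendant
   vertex at v. *)
Lemma mincut_false : False.
Proof.
have [f [g Hfg]] := splits_choice mincut_splits.
have := pendant_at_card v PS; rewrite leqNgt => /negP; apply.
apply: (splitting_pairs_escape (f := f) (g := g) PS).
- by apply/subsetP => p /(cut_onS cutC)[].
- by case: cutC.
- move=> w wC; have sp := Hfg w wC.
  by split=> //; [exact: mincut_split_fst wC sp | exact: mincut_split_snd wC sp].
Qed.

End MinimalCut.

Lemma critical_leaf :
  exists l u, [/\ l \in S, u \in S & forall c, c \in S -> e l c = (c == u)].
Proof.
have [v [C cC]] := critical_has_cut.
have [n] := ubnP #|C|; elim: n v C cC => // n IH v C cC ltCn.
case: (classic (exists w C', cut_on S w C' /\ #|C'| < #|C|)).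
  by case=> w [C' [cC' lt]]; apply: (IH w C' cC'); lia.
move=> nosmaller.
have minC w C' : cut_on S w C' -> #|C| <= #|C'|.
  by move=> cC'; rewrite leqNgt; apply/negP => lt; apply: nosmaller; exists w, C'.
have [C1 | C2] := leqP #|C| 1; last by case: (mincut_false cC minC C2).
have /cards1P [p Cp] : #|C| == 1 by rewrite eqn_leq C1 card_gt0; case: cC.
have pC : p \in C by rewrite Cp set11.
have [pS _] := cut_onS cC pC.
rewrite Cp in cC; exists p, v; split=> //; first by case: cC.
exact: cut_singleton_leaf cC.
Qed.

Lemma critical_leaf_twin l u : l \in S -> u \in S ->
    (forall c, c \in S -> e l c = (c == u)) ->
  exists u', [/\ u' \in S :\ l, u' != u & forall c, c \in S :\ l -> e u c = e u' c].
Proof.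
move=> lS uS l_leaf; have elu : e l u by rewrite l_leaf ?eqxx.
have ul : u != l by apply: contraTneq elu => ->; rewrite e_irr.
have [C|a [u' [aS u'S eal nu'l au']]] := critical_split lS.
  by apply: (no_cut_dominated PS uS ul) => c cS cu; rewrite l_leaf // (negbTE cu).
have /eqP au : a == u by rewrite -l_leaf; [rewrite e_sym | case/setD1P: aS].
exists u'; split=> //; last by rewrite -au.
by apply: contraNneq nu'l => ->; rewrite -au.
Qed.

Lemma critical_joiner l u u' : l \in S -> u \in S -> u' \in S :\ l -> u' != u ->
    (forall c, c \in S -> e l c = (c == u)) ->
    (forall c, c \in S :\ l -> e u c = e u' c) ->
  exists2 z, z \in S & forall c, c \in S -> e z c = (c == u) || (c == u').
Proof.
move=> lS uS /setD1P[u'l u'S] u'u l_leaf u_twin.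
have nu'l : ~~ e u' l by rewrite e_sym l_leaf // (negbTE u'u).
have [C|z [b [zS bS ezu' nbu' zb]]] := critical_split u'S.
  have uu' : u != u' by rewrite eq_sym.
  apply: (no_cut_dominated PS uS uu') => c cS cu eu'c.
  by rewrite u_twin // !inE cS andbT; apply: contraTneq eu'c => ->.
have [zu' zS'] := setD1P zS; have [bu' bS'] := setD1P bS.
have zl : z != l by apply: contraTneq ezu' => ->; rewrite l_leaf // (negbTE u'u).
have ezu : e z u by rewrite e_sym u_twin; [rewrite e_sym | rewrite !inE zl].
have bl : b = l.
  apply/eqP; apply: contraT => bl.
  have ebu : e b u by rewrite -zb // !inE uS andbT eq_sym.
  have eu'b : e u' b by rewrite -u_twin; [rewrite e_sym | rewrite !inE bl].
  by rewrite e_sym eu'b in nbu'.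
exists z => // c cS; have [-> | cu'] := eqVneq c u'; first by rewrite ezu' orbT.
by rewrite orbF zb ?bl ?l_leaf // !inE cu'.
Qed.

End CriticalLeaf.

(** * Critical graphs are nested *)

Definition nested_on S := forall a b, a \in S -> b \in S -> (a \in X) = (b \in X) ->
  (forall c, c \in S -> e a c -> e b c) \/ (forall c, c \in S -> e b c -> e a c).

Lemma nested_small S : #|S| <= 3 -> nested_on S.
Proof.
move=> S3 a b aS bS sab.
have [<- | ab] := eqVneq a b; first by left.
case: (classic (exists2 c, c \in S & e a c)) => [[c cS eac] | NC]; last first.
  by left => c cS eac; exfalso; apply: NC; exists c.
right => c' c'S ebc'; apply: contraTT S3 => neac'; rewrite -ltnNge.
have c'c : c' != c by apply: contraNneq neac' => ->.
have ca : c != a by apply: contraTneq eac => ->; rewrite e_irr.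
have cb : c != b by apply: contraTneq eac => ->; apply: same_side_nonadj.
have c'a : c' != a by apply: contraTneq ebc' => ->; rewrite e_sym; apply: same_side_nonadj.
have c'b : c' != b by apply: contraTneq ebc' => ->; rewrite e_irr.
have U : uniq [:: a; b; c; c'].
  rewrite /= !inE !negb_or ab (eq_sym a c) ca (eq_sym a c') c'a (eq_sym b c) cb.
  by rewrite (eq_sym b c') c'b (eq_sym c c') c'c.
have sub : {subset [:: a; b; c; c'] <= enum S}.
  by move=> x; rewrite mem_enum !inE => /orP[/eqP-> | /orP[/eqP-> | /orP[/eqP-> | /eqP->]]].
by rewrite cardE; apply: (uniq_leq_size U sub).
Qed.

Section LeafReduction.
Variables (S : {set T}) (l u u' : T).
Hypotheses (PS : prime_on e S) (lS : l \in S) (uS : u \in S) (u'S : u' \in S).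
Hypothesis l_leaf : forall c, c \in S -> e l c = (c == u).
Hypothesis u_twin : forall c, c \in S :\ l -> e u c = e u' c.
Hypotheses (u'l : u' != l) (u'u : u' != u).

Local Notation S0 := (S :\ l :\ u).

Let inS0 x : (x \in S0) = [&& x != u, x != l & x \in S].
Proof. by rewrite !inE. Qed.

Let S0S : S0 \subset S.
Proof. exact: subset_trans (subD1set _ u) (subD1set S l). Qed.

Let elu : e l u.
Proof. by rewrite l_leaf ?eqxx. Qed.

Let ul : u != l.
Proof. by apply: contraTneq elu => ->; rewrite e_irr. Qed.

Let nu'l : ~~ e u' l.
Proof. by rewrite e_sym l_leaf // (negbTE u'u). Qed.

Let nu'u : ~~ e u' u.
Proof. by rewrite -u_twin ?e_irr // !inE ul uS. Qed.

Let su : (u' \in X) = (u \in X).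
Proof.
have [q qS eu'q] := prime_nbr PS u'S.
have ql : q != l by apply: contraTneq eu'q => ->; rewrite (negbTE nu'l).
have euq : e u q by rewrite u_twin // !inE ql qS.
exact: common_nbr_side eu'q euq.
Qed.

Let S0_nonadj_l x : x \in S0 -> ~~ e l x.
Proof. by rewrite inS0 => /and3P[xu _ xS]; rewrite l_leaf // (negbTE xu). Qed.

Let S0_twin x : x \in S0 -> e u x = e u' x.
Proof. by rewrite inS0 => /and3P[_ xl xS]; apply: u_twin; rewrite !inE xl xS. Qed.

Let u'S0 : u' \in S0.
Proof. by rewrite inS0 u'u u'l u'S. Qed.

Let S0_module_lift M : module_on e S0 M -> u' \notin M -> module_on e S M.
Proof.
case=> sM HM u'M; split=> [|w]; first exact: subset_trans sM S0S.
rewrite inE => /andP[wM wS].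
have [-> | wl] := eqVneq w l; first by right => m /(subsetP sM); apply: S0_nonadj_l.
have [-> | wu] := eqVneq w u; last by apply: HM; rewrite inE wM inS0 wu wl wS.
have /HM[H|H] : u' \in S0 :\: M by rewrite inE u'M u'S0.
- by left => m mM; rewrite S0_twin ?H // (subsetP sM).
- by right => m mM; rewrite S0_twin ?H // (subsetP sM).
Qed.

Let S0_closed_lift M : closed_on S0 M -> u' \in M -> closed_on S (u |: (l |: M)).
Proof.
case=> sM cl u'M; split.
  apply/subsetP => x; rewrite !inE => /orP[/eqP-> | /orP[/eqP-> | /(subsetP sM)]] //.
  by rewrite inS0 => /and3P[].
move=> p q; rewrite !inE !negb_or => pM' qS /and3P[qu ql qM].
have qS0 : q \in S0 by rewrite inS0 qu ql qS.
case/orP: pM' => [/eqP-> | /orP[/eqP-> | pM]]; last exact: cl.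
- by rewrite S0_twin //; apply: cl.
- exact: S0_nonadj_l.
Qed.

Let S0_joined_single M c : module_on e S0 M -> c \in S0 :\: M ->
  (forall m, m \in M -> e c m) -> u' \in M -> M = [set u'].
Proof.
move=> modM cM call u'M; case: (modM) => sM _.
apply/eqP; rewrite eqEsubset sub1set u'M andbT; apply/subsetP => m mM; rewrite inE.
apply/negPn/negP => mu'; have mS0 := subsetP sM m mM.
have sm : (m \in X) = (u' \in X) by apply: (common_nbr_side (w := c)); rewrite e_sym call.
apply: (prime_no_twins PS (subsetP S0S m mS0) u'S mu') => d dS _ _.
have [-> | dl] := eqVneq d l; first by rewrite e_sym (negbTE (S0_nonadj_l mS0)) (negbTE nu'l).
have [-> | du] := eqVneq d u.
  by rewrite (negbTE nu'u); apply/negbTE/same_side_nonadj; rewrite sm su.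
by apply: (joined_module_twins modM cM call mM u'M); rewrite inS0 du dl dS.
Qed.

Lemma leaf_reduction_prime : 3 <= #|S0| -> prime_on e S0.
Proof.
move=> S03; split=> // M modM.
have [u'M | u'M] := boolP (u' \in M); last first.
  case: PS => _ /(_ M (S0_module_lift modM u'M)) [E | [E | E]]; [by left | | by right; right].
  by case: modM => /subsetP/(_ l); rewrite E lS inS0 eqxx andbF => /(_ isT).
case: (module_closed_or_joined modM) => [cM | [c cM call]]; last first.
  by right; right; rewrite (S0_joined_single modM cM call u'M) cards1.
have M'0 : u |: (l |: M) != set0 by apply/set0Pn; exists u; rewrite !inE eqxx.
have E := prime_closed_on PS (S0_closed_lift cM u'M) M'0.
right; left; apply/eqP; rewrite eqEsubset; case: modM => -> _ /=.
apply/subsetP => x; rewrite inS0 => /and3P[xu xl xS].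
by move: xS; rewrite -E !inE (negbTE xu) (negbTE xl).
Qed.

Let S0w_nonprime_off w Y : w \in S0 -> 3 <= #|S0 :\ w| -> closed_on (S :\ w) Y ->
  Y != set0 -> Y :&: S0 = set0 -> ~ prime_on e (S0 :\ w).
Proof.
move=> wS0 S3w [sY clY] Y0 YS0; move: (wS0); rewrite inS0 => /and3P[wu wl wS].
have uSw : u \in S :\ w by rewrite !inE eq_sym wu uS.
have notS0 y : y \in Y -> y \notin S0.
  by move=> yY; apply/negP => yS0; move/setP/(_ y): YS0; rewrite in_setI yY yS0 in_set0.
have uY : u \in Y.
  case/set0Pn: Y0 => y yY; have /setD1P[_ yS] := subsetP sY y yY.
  move: (notS0 y yY); rewrite inS0 yS andbT negb_and !negbK => /orP[/eqP <- // | /eqP yl].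
  by apply: contraT => uY; have := clY y u yY uSw uY; rewrite yl elu.
have only_w q : q \in S -> e u' q -> q = w.
  move=> qS eu'q; apply/eqP/negPn/negP => qw.
  have ql : q != l by apply: contraTneq eu'q => ->; rewrite (negbTE nu'l).
  have qSw : q \in S :\ w by rewrite !inE qw qS.
  have euq : e u q by rewrite u_twin // !inE ql qS.
  have qY : q \in Y.
    by apply: contraT => qY; rewrite (negbTE (clY u q uY qSw qY)) in euq.
  move: (notS0 q qY); rewrite inS0 ql qS !andbT negbK => /eqP qu.
  by move: eu'q; rewrite qu (negbTE nu'u).
have [q qS eu'q] := prime_nbr PS u'S.
have qw := only_w q qS eu'q.
have u'w : u' != w by apply: contraTneq eu'q => ->; rewrite qw e_irr.
have u'S0w : u' \in S0 :\ w by rewrite !inE u'w u'u u'l u'S.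
apply: (isolated_not_prime u'S0w (ltnW S3w)) => r /setD1P[rw /setD1P[_ /setD1P[_ rS]]].
by apply: contra rw => /(only_w r rS) ->.
Qed.

Let S0w_nonprime_cut w M : w \in S0 -> 3 <= #|S0 :\ w| -> cut_on S w M ->
  ~ prime_on e (S0 :\ w).
Proof.
move=> wS0 S3w cutM; have [wS cM M0 _] := cutM; have [_ cB B0 _] := cut_onD cutM.
have [MS0 | MS0] := eqVneq (M :&: S0) set0; first exact: S0w_nonprime_off cM M0 MS0.
have [BS0 | BS0] := eqVneq (((S :\ w) :\: M) :&: S0) set0.
  exact: S0w_nonprime_off cB B0 BS0.
apply: (@not_prime_closed_on (S0 :\ w) (M :&: S0)) => //.
- split=> [|p q /setIP[pM pS0] /setD1P[qw qS0] qMS0].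
    apply/subsetP => x /setIP[xM xS0]; rewrite in_setD1 xS0 andbT.
    by have [_ ->] := cut_onS cutM xM.
  have qM : q \notin M by apply: contra qMS0 => qM; rewrite inE qM qS0.
  exact: cut_nonadj cutM pM (subsetP S0S q qS0) qw qM.
- apply/eqP => E; case/set0Pn: BS0 => x /setIP[/setDP[/setD1P[xw xS] xM] xS0].
  have : x \in S0 :\ w by rewrite in_setD1 xw xS0.
  by rewrite -E inE (negbTE xM).
Qed.

Let S0w_nonprime_split w a b : w \in S0 -> 3 <= #|S0 :\ w| -> splits_on S w a b ->
  ~ prime_on e (S0 :\ w).
Proof.
move=> wS0 S3w [/setD1P[aw aS] /setD1P[bw bS] eaw nbw ab].
move: wS0; rewrite inS0 => /and3P[wu wl wS].
have abl : e a l = e b l by rewrite ab // !inE eq_sym wl lS.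
have al : a != l by apply: contraTneq eaw => ->; rewrite l_leaf // (negbTE wu).
have au : a != u.
  apply: contraTneq nbw => au; rewrite negbK.
  have /eqP -> : b == u by rewrite -l_leaf // e_sym -abl au e_sym elu.
  by rewrite -au.
have bu : b != u.
  apply: contraNneq au => bu.
  by rewrite -l_leaf // e_sym abl bu e_sym elu.
have aS0 : a \in S0 :\ w by rewrite !inE aw au al aS.
have [bl | bl] := eqVneq b l.
  apply: (isolated_not_prime aS0 (ltnW S3w)) => q /setD1P[qw /setD1P[qu /setD1P[_ qS]]].
  by rewrite ab ?bl ?l_leaf ?(negbTE qu) // !inE qw qS.
have bS0 : b \in S0 :\ w by rewrite !inE bw bu bl bS.
move=> P0; apply: (prime_no_twins P0 aS0 bS0); first by apply: contraTneq eaw => ->.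
by move=> c /setD1P[cw /setD1P[_ /setD1P[_ cS]]] _ _; apply: ab; rewrite !inE cw cS.
Qed.

Lemma leaf_reduction_critical : critical_on S -> 4 <= #|S0| -> critical_on S0.
Proof.
move=> [_ NP] S04; split=> [|w wS0]; first exact/leaf_reduction_prime/ltnW.
have wS := subsetP S0S w wS0.
have S4 : 4 <= #|S| by apply: leq_trans S04 (subset_leq_card S0S).
have S3w : 3 <= #|S0 :\ w| by move: S04; rewrite (cardsD1 w S0) wS0.
case: (nonprime_deletion PS wS S4 (NP w wS)) => [[M cM] | [a [b sab]]].
- exact: S0w_nonprime_cut cM.
- exact: S0w_nonprime_split sab.
Qed.

Section Joiner.
Variable z : T.
Hypotheses (zS : z \in S) (z_nbrs : forall c, c \in S -> e z c = (c == u) || (c == u')).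
Hypothesis nest0 : nested_on S0.

Let ezu : e z u.
Proof. by rewrite z_nbrs ?eqxx. Qed.

Let ezu' : e z u'.
Proof. by rewrite z_nbrs ?eqxx ?orbT. Qed.

Let side_z : (z \in X) = ~~ (u \in X).
Proof. by rewrite (edge_side ezu) negbK. Qed.

Let side_l : (l \in X) = ~~ (u \in X).
Proof. by rewrite (edge_side elu) negbK. Qed.

Let zS0 : z \in S0.
Proof.
rewrite inS0 zS andbT; apply/andP; split.
- by apply: contraTneq ezu => ->; rewrite e_irr.
- by apply: contraTneq ezu' => ->; rewrite l_leaf // (negbTE u'u).
Qed.

Let S0_adj_u x : x \in S0 -> (x \in X) = ~~ (u \in X) -> e x u.
Proof.
move=> xS0 sx; suff : e x u' by rewrite e_sym -S0_twin // e_sym.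
have xS := subsetP S0S x xS0.
have [H | H] := nest0 xS0 zS0 (etrans sx (esym side_z)); last exact: H u' u'S0 ezu'.
have [q qS exq] := prime_nbr PS xS.
have [ql | ql] := eqVneq q l.
  by move: exq; rewrite ql e_sym (negbTE (S0_nonadj_l xS0)).
have [qu | qu] := eqVneq q u; first by rewrite e_sym -S0_twin // e_sym -qu.
have qS0 : q \in S0 by rewrite inS0 qu ql qS.
by have := H q qS0 exq; rewrite z_nbrs // (negbTE qu) /= => /eqP <-.
Qed.

Let nested_at_l b : b \in S -> (b \in X) = (l \in X) ->
  forall c, c \in S -> e l c -> e b c.
Proof.
move=> bS sb c cS; rewrite l_leaf // => /eqP->.
have [-> | bl] := eqVneq b l; first exact: elu.
have [bu | bu] := eqVneq b u.
  by move: sb; rewrite side_l bu; case: (u \in X).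
by apply: S0_adj_u; rewrite ?inS0 ?bu ?bl ?bS // sb side_l.
Qed.

Let nested_at_u b : b \in S -> (b \in X) = (u \in X) ->
  forall c, c \in S -> e b c -> e u c.
Proof.
move=> bS sb c cS ebc.
have [<- // | bu] := eqVneq b u.
have [bl | bl] := eqVneq b l.
  by move: sb; rewrite bl side_l; case: (u \in X).
have bS0 : b \in S0 by rewrite inS0 bu bl bS.
have [cl | cl] := eqVneq c l.
  by move: ebc; rewrite cl e_sym (negbTE (S0_nonadj_l bS0)).
have [cu | cu] := eqVneq c u.
  by move: ebc; rewrite cu (negbTE (same_side_nonadj sb)).
rewrite e_sym; apply: S0_adj_u; first by rewrite inS0 cu cl cS.
by rewrite (edge_side ebc) sb.
Qed.

Let S0_nested_lift a b : a \in S0 -> b \in S0 -> (a \in X) = (b \in X) ->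
  (forall c, c \in S0 -> e a c -> e b c) -> forall c, c \in S -> e a c -> e b c.
Proof.
move=> aS0 bS0 sab H c cS eac.
have [cl | cl] := eqVneq c l.
  by move: eac; rewrite cl e_sym (negbTE (S0_nonadj_l aS0)).
have [cu | cu] := eqVneq c u; last by apply: H; rewrite ?inS0 ?cu ?cl ?cS.
by rewrite cu in eac *; apply: S0_adj_u; rewrite // -sab (edge_side eac) negbK.
Qed.

Lemma leaf_reduction_nested : nested_on S.
Proof.
move=> a b aS bS sab.
have [al | al] := eqVneq a l.
  by left; rewrite al; apply: nested_at_l; rewrite -?al.
have [au | au] := eqVneq a u.
  by right; rewrite au; apply: nested_at_u; rewrite -?au.
have [bl | bl] := eqVneq b l.
  by right; rewrite bl; apply: nested_at_l; rewrite -?bl.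
have [bu | bu] := eqVneq b u.
  by left; rewrite bu; apply: nested_at_u; rewrite -?bu.
have aS0 : a \in S0 by rewrite inS0 au al aS.
have bS0 : b \in S0 by rewrite inS0 bu bl bS.
by case: (nest0 aS0 bS0 sab) => H; [left | right]; apply: S0_nested_lift.
Qed.

End Joiner.
End LeafReduction.

Lemma critical_nested S : critical_on S -> nested_on S.
Proof.
have [n] := ubnP #|S|; elim: n S => // n IH S ltSn crit.
have [S3 | S4] := leqP #|S| 3; first exact: nested_small.
have [PS _] := crit.
have [l [u [lS uS l_leaf]]] := critical_leaf crit S4.
have [u' [u'Sl u'u u_twin]] := critical_leaf_twin crit S4 lS uS l_leaf.
have [u'l u'S] := setD1P u'Sl.
have [z zS z_nbrs] := critical_joiner crit S4 lS uS u'Sl u'u l_leaf u_twin.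
apply: (leaf_reduction_nested PS uS u'S l_leaf u_twin u'l u'u zS z_nbrs).
have [S03 | S04] := leqP #|S :\ l :\ u| 3; first exact: nested_small.
apply: IH (leaf_reduction_critical PS lS uS u'S l_leaf u_twin u'l u'u crit S04).
rewrite ltnS in ltSn; apply: leq_trans _ ltSn; apply: proper_card.
exact: sub_proper_trans (subD1set _ u) (properD1 lS).
Qed.

(** * Prime graphs without induced P5 *)

Lemma contains_P5_of a b c d w : e a w -> e c w -> e a b -> ~~ e c b -> e c d ->
  ~~ e a d -> contains_P5 e.
Proof.
move=> eaw ecw eab /negbTE ncb ecd /negbTE nad.
have sbw : (b \in X) = (w \in X) by apply: (common_nbr_side (w := a)); rewrite e_sym.
have swd : (w \in X) = (d \in X) by apply: (common_nbr_side (w := c)); rewrite e_sym.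
have /negbTE nbw := same_side_nonadj sbw.
have /negbTE nwd := same_side_nonadj swd.
have /negbTE nbd := same_side_nonadj (etrans sbw swd).
have /negbTE nac := same_side_nonadj (common_nbr_side eaw ecw).
pose f (i : 'I_5) := nth a [:: b; a; w; c; d] i.
have adj i j : e (f i) (f j) = path_adj i j.
  move: i j => [[|[|[|[|[|?]]]]] ?] [[|[|[|[|[|?]]]]] ?] //=;
  by rewrite ?e_irr ?eab ?eaw ?ecw ?ecd ?nbw ?nwd ?nbd ?nac ?ncb ?nad //
     e_sym ?eab ?eaw ?ecw ?ecd ?nbw ?nwd ?nbd ?nac ?ncb ?nad.
exists f; split=> // i j fij; apply: path_adj5_twin_free => k.
by rewrite -!adj fij.
Qed.

Lemma P5_free_common_nbr : ~ contains_P5 e -> forall a c w, e a w -> e c w ->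
  (forall x, e a x -> e c x) \/ (forall x, e c x -> e a x).
Proof.
move=> NP a c w eaw ecw.
case: (classic (forall x, e a x -> e c x)) => [|H1]; first by left.
case: (classic (forall x, e c x -> e a x)) => [|H2]; first by right.
have [b eab ncb] : exists2 b, e a b & ~~ e c b.
  apply: NNPP => H; apply: H1 => x eax; apply/negPn/negP => ncx; apply: H; by exists x.
have [d ecd nad] : exists2 d, e c d & ~~ e a d.
  apply: NNPP => H; apply: H2 => x ecx; apply/negPn/negP => nax; apply: H; by exists x.
by case: NP; apply: (contains_P5_of eaw ecw eab ncb ecd nad).
Qed.

(* For xs of maximal degree in X, the vertices of X sharing a neighbour with xs,
   together with the neighbours of xs, form a union of components: a vertex of
   X with a common neighbour has a nested, hence smaller, neighbourhood. *)
Lemma P5_free_dominating : prime_on e [set: T] -> ~ contains_P5 e ->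
  forall x0, x0 \in X -> exists2 x, x \in X & forall y, y \notin X -> e x y.
Proof.
move=> PT NP x0 x0X.
case: (arg_maxnP (fun x => #|nbhd x|) x0X) => xs xsX' Hmax; have xsX : xs \in X := xsX'.
pose U := [set x in X | [exists y, e x y && e xs y]].
have cM : closed_on [set: T] (U :|: nbhd xs).
  split=> [|p q]; first exact: subsetT.
  rewrite !inE => pM _; rewrite negb_or => /andP[qU qN]; apply/negP => epq.
  case/orP: pM => [/andP[pX /existsP[y0 /andP[epy exy]]] | exp].
  - case: (P5_free_common_nbr NP epy exy) => H; first by move: qN; rewrite (H _ epq).
    have E : nbhd xs = nbhd p.
      have le : #|nbhd p| <= #|nbhd xs| := Hmax p pX.
      apply/eqP; rewrite eqEcard le andbT.
      by apply/subsetP => z; rewrite !inE => /H.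
    have : q \in nbhd p by rewrite inE.
    by rewrite -E inE (negbTE qN).
  - have qX : q \in X by rewrite (edge_side epq) (edge_side exp) negbK.
    move: qU; rewrite qX /=; apply/negP; rewrite negbK; apply/existsP; exists p.
    by rewrite e_sym epq exp.
have M0 : U :|: nbhd xs != set0.
  apply/set0Pn; exists xs; rewrite !inE xsX /=; apply/orP; left.
  have [q _ exq] := prime_nbr PT (in_setT xs); apply/existsP; exists q; by rewrite exq.
have E := prime_closed_on PT cM M0.
exists xs => // y yX.
have : y \in U :|: nbhd xs by rewrite E in_setT.
by rewrite !inE (negbTE yX).
Qed.

Section PrimeNested.
Hypotheses (PT : prime_on e [set: T]) (nest : nested_on [set: T]).

Let nbhd_nested a b : (a \in X) = (b \in X) ->
  nbhd a \subset nbhd b \/ nbhd b \subset nbhd a.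
Proof.
move=> sab; case: (nest (in_setT a) (in_setT b) sab) => H; [left | right];
  by apply/subsetP => c; rewrite !inE; apply: H.
Qed.

Let nbhd_inj a b : nbhd a = nbhd b -> a = b.
Proof.
move=> E; apply/eqP; apply: contraT => ab; exfalso.
apply: (prime_no_twins PT (in_setT a) (in_setT b) ab) => c _ _ _.
by move/setP/(_ c): E; rewrite !inE.
Qed.

Let partner_exists x : x \in X ->
  exists2 y, y \notin X & forall x', x' \in X -> e x' y = (nbhd x \subset nbhd x').
Proof.
move=> xX; have [y0 _ exy0] := prime_nbr PT (in_setT x).
case: (arg_minnP (P := e x) (fun y => #|nbhd y|) exy0) => y exy Hmin.
have yX : y \notin X by rewrite (edge_side exy) xX.
exists y => // x' x'X; apply/idP/idP => [eyx' | /subsetP/(_ y)]; last first.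
  by rewrite !inE => /(_ exy).
apply/subsetP => y'; rewrite !inE => exy'; apply: contraT => nx'y'.
have syy' : (y \in X) = (y' \in X) by apply: (common_nbr_side (w := x)); rewrite e_sym.
have [sub | sub] := nbhd_nested syy'.
- by move/subsetP/(_ x'): sub; rewrite !inE e_sym eyx' e_sym (negbTE nx'y') => /(_ isT).
- have lt : #|nbhd y'| < #|nbhd y|.
    apply: proper_card; rewrite properE sub /=.
    by apply/negP => /subsetP/(_ x'); rewrite !inE e_sym eyx' e_sym (negbTE nx'y') => /(_ isT).
  by have := Hmin y' exy'; rewrite leqNgt lt.
Qed.

Let partner_onto y : y \notin X ->
  exists2 x, x \in X & forall x', x' \in X -> e x' y = (nbhd x \subset nbhd x').
Proof.
move=> yX; have [x0 _ eyx0] := prime_nbr PT (in_setT y).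
case: (arg_minnP (P := e y) (fun x => #|nbhd x|) eyx0) => x eyx Hmin.
have xX : x \in X by rewrite (edge_side eyx) yX.
exists x => // x' x'X; apply/idP/idP => [eyx' | /subsetP/(_ y)]; last first.
  by rewrite !inE !(e_sym _ y) => /(_ eyx).
have [// | sub] := nbhd_nested (etrans xX (esym x'X)).
have le : #|nbhd x| <= #|nbhd x'| by apply: Hmin; rewrite e_sym.
by have /eqP -> : nbhd x' == nbhd x by rewrite eqEcard sub.
Qed.

Lemma prime_nested_half : half_graph e.
Proof.
have ex_partner x : exists y, x \in X ->
    y \notin X /\ forall x', x' \in X -> e x' y = (nbhd x \subset nbhd x').
  have [xX | _] := boolP (x \in X); last by exists x.
  by have [y yX Hy] := partner_exists xX; exists y.
have [phi phiP] := fin_all_exists ex_partner.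
have phiX x : x \in X -> phi x \notin X by case/phiP.
have ephi x x' : x \in X -> x' \in X -> e x (phi x') = (nbhd x' \subset nbhd x).
  by move=> xX x'X; have [_ ->] := phiP x' x'X.
have phi_onto y : y \notin X -> exists2 x, x \in X & phi x = y.
  move=> yX; have [x xX Hx] := partner_onto yX; exists x => //.
  apply: nbhd_inj; apply/setP => c; rewrite !inE.
  have [cX | cX] := boolP (c \in X); first by rewrite !(e_sym _ c) ephi // Hx.
  rewrite !(negbTE (same_side_nonadj _)) //.
    by move: yX cX; case: (y \in X); case: (c \in X).
  by move: (phiX x xX) cX; case: (phi x \in X); case: (c \in X).
exists X, (fun x x' => nbhd x' \subset nbhd x), phi.
split; [split; [|split; [|split]] | split; [|split; [|split]]].
- by move=> x _; exact: subxx.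
- by move=> x y _ _ /andP[h1 h2]; apply: nbhd_inj; apply/eqP; rewrite eqEsubset h1 h2.
- by move=> y x z _ _ _ h1 h2; exact: subset_trans h2 h1.
- by move=> x y xX yX; case: (nbhd_nested (etrans xX (esym yX))) => ->; rewrite ?orbT.
- move=> x x' xX x'X E.
  have h1 : nbhd x' \subset nbhd x by rewrite -ephi // -E ephi.
  have h2 : nbhd x \subset nbhd x' by rewrite -ephi // E ephi.
  by apply: nbhd_inj; apply/eqP; rewrite eqEsubset h1 h2.
- by move=> x xX; rewrite inE phiX.
- by move=> y; rewrite inE => /phi_onto.
- move=> u v; split.
  + move=> euv; case: (boolP (u \in X)) => uX.
    * have vX : v \notin X by rewrite (edge_side euv) uX.
      have [x' x'X E] := phi_onto v vX; exists u, x'.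
      by split=> //; [rewrite -ephi // E | left].
    * have vX : v \in X by rewrite (edge_side euv).
      have [x' x'X E] := phi_onto u uX; exists v, x'.
      by split=> //; [rewrite -ephi // E e_sym | right].
  + case=> x [x' [xX x'X Lxx' [[-> ->] | [-> ->]]]].
    * by rewrite ephi.
    * by rewrite e_sym ephi.
Qed.

End PrimeNested.

Lemma nested_P5_free : nested_on [set: T] -> ~ contains_P5 e.
Proof.
move=> nest [f [_ Hf]].
pose x k (k5 : k < 5) := f (Ordinal k5).
have e10 : e (x 1 isT) (x 0 isT) by rewrite Hf.
have e12 : e (x 1 isT) (x 2 isT) by rewrite Hf.
have e32 : e (x 3 isT) (x 2 isT) by rewrite Hf.
have e34 : e (x 3 isT) (x 4 isT) by rewrite Hf.
have n30 : e (x 3 isT) (x 0 isT) = false by rewrite Hf.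
have n14 : e (x 1 isT) (x 4 isT) = false by rewrite Hf.
case: (nest _ _ (in_setT _) (in_setT _) (common_nbr_side e12 e32)) => H.
- by move: (H _ (in_setT _) e10); rewrite n30.
- by move: (H _ (in_setT _) e34); rewrite n14.
Qed.

End Bipartite.

Lemma P5_free_nested (X : {set T}) : (forall u v, e u v -> (u \in X) != (v \in X)) ->
  prime_on e [set: T] -> ~ contains_P5 e -> nested_on X [set: T].
Proof.
move=> bipX PT NP a b _ _ sab.
have bipC u v : e u v -> (u \in ~: X) != (v \in ~: X).
  by move/bipX; rewrite !inE; case: (u \in X); case: (v \in X).
suff [x exa exb] : exists2 x, e a x & e b x.
  by case: (P5_free_common_nbr bipX NP exa exb) => H; [left | right] => c _; apply: H.
have [q _ eaq] := prime_nbr PT (in_setT a).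
have [aX | aX] := boolP (a \in X).
- have qX : q \in ~: X by rewrite inE (edge_side bipX eaq) aX.
  have [x _ Hx] := P5_free_dominating bipC PT NP qX.
  by exists x; rewrite e_sym; apply: Hx; rewrite inE negbK // -sab.
- have qX : q \in X by rewrite (edge_side bipX eaq) aX.
  have [x _ Hx] := P5_free_dominating bipX PT NP qX.
  by exists x; rewrite e_sym; apply: Hx; rewrite // -sab.
Qed.

(** * Half graphs *)

Section HalfGraph.
Variables (H : {set T}) (L : rel T) (phi : T -> T).
Hypotheses (ordL : linear_order_on H L) (phi_inj : {in H &, injective phi}).
Hypothesis phiH : forall x, x \in H -> phi x \in ~: H.
Hypothesis phi_onto : forall y, y \in ~: H -> exists2 x, x \in H & phi x = y.
Hypothesis half_edge : forall u v, e u v <->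
  exists x x', [/\ x \in H, x' \in H, L x x' &
    ((u = x /\ v = phi x') \/ (u = phi x' /\ v = x))].

Let reflL : {in H, reflexive L} := ordL.1.
Let antiL : {in H &, antisymmetric L} := ordL.2.1.
Let transL : {in H & H & H, forall x y z, L x y -> L y z -> L x z} := ordL.2.2.1.
Let totL : {in H &, total L} := ordL.2.2.2.

Lemma half_phi_notin x : x \in H -> phi x \notin H.
Proof. by move/phiH; rewrite inE. Qed.

Lemma half_adj x x' : x \in H -> x' \in H -> e x (phi x') = L x x'.
Proof.
move=> xH x'H; apply/idP/idP => [/half_edge [a [a' [aH a'H Laa' [[E1 E2] | [E1 E2]]]]] | Lxx'].
- by subst a; rewrite (phi_inj x'H a'H E2).
- by move: xH; rewrite E1 (negbTE (half_phi_notin a'H)).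
- by apply/half_edge; exists x, x'; split=> //; left.
Qed.

Lemma half_onto y : y \notin H -> exists2 x, x \in H & phi x = y.
Proof. by move=> yH; apply: phi_onto; rewrite inE. Qed.

Lemma half_bip u v : e u v -> (u \in H) != (v \in H).
Proof.
by case/half_edge => a [a' [aH a'H _ [[-> ->] | [-> ->]]]];
  rewrite aH (negbTE (half_phi_notin a'H)).
Qed.

Lemma half_nested : nested_on H [set: T].
Proof.
have nbr_side c x : e x c -> (c \in H) = ~~ (x \in H).
  by move/half_bip; case: (x \in H); case: (c \in H).
move=> a b _ _ sab.
have [aH | aH] := boolP (a \in H).
  have bH : b \in H by rewrite -sab.
  case/orP: (totL aH bH) => [Lab | Lba]; [right | left] => c _ ec.
  - have cH : c \notin H by rewrite (nbr_side _ _ ec) bH.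
    have [z zH Ez] := half_onto cH.
    by move: ec; rewrite -Ez !half_adj // => Lbz; apply: transL Lab Lbz.
  - have cH : c \notin H by rewrite (nbr_side _ _ ec) aH.
    have [z zH Ez] := half_onto cH.
    by move: ec; rewrite -Ez !half_adj // => Laz; apply: transL Lba Laz.
have bH : b \notin H by rewrite -sab.
have [w wH <-] := half_onto aH; have [w' w'H <-] := half_onto bH.
case/orP: (totL wH w'H) => [Lww' | Lw'w]; [left | right] => c _ ec.
- have cH : c \in H by rewrite (nbr_side _ _ ec) half_phi_notin.
  by move: ec; rewrite !(e_sym _ c) !half_adj // => Lcw; apply: transL Lcw Lww'.
- have cH : c \in H by rewrite (nbr_side _ _ ec) half_phi_notin.
  by move: ec; rewrite !(e_sym _ c) !half_adj // => Lcw'; apply: transL Lcw' Lw'w.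
Qed.

Lemma half_connected M : (forall p q, p \in M -> e p q -> q \in M) -> M != set0 ->
  M = [set: T].
Proof.
move=> cl /set0Pn[m mM].
have H0 : H != set0.
  have [mH | mH] := boolP (m \in H); first by apply/set0Pn; exists m.
  by have [x xH _] := half_onto mH; apply/set0Pn; exists x.
have [t tH Ht] := linear_order_max H0 ordL.
have [b bH Hb] := linear_order_max H0 (linear_order_dual ordL).
have all_in x : x \in H -> x \in M -> M = [set: T].
  move=> xH xM; have ptM : phi t \in M by apply: (cl x); rewrite // half_adj // Ht.
  have HM z : z \in H -> z \in M.
    by move=> zH; apply: (cl (phi t)); rewrite // e_sym half_adj // Ht.
  apply/eqP; rewrite eqEsubset subsetT; apply/subsetP => y _.
  have [yH | yH] := boolP (y \in H); first exact: HM.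
  by have [z zH <-] := half_onto yH; apply: (cl b _ (HM b bH)); rewrite half_adj //; apply: Hb.
have [mH | mH] := boolP (m \in H); first exact: all_in mH mM.
have [z zH Ez] := half_onto mH; apply: (all_in b bH); apply: (cl m _ mM).
by rewrite -Ez e_sym half_adj //; apply: Hb.
Qed.

(* If x < x' in H lie in a module, so does phi x, which distinguishes them; if
   phi w and phi w' (w < w') lie in a module, so does w', which distinguishes
   them. *)
Lemma half_module_both_sides M p q : module_on e [set: T] M -> p \in M -> q \in M ->
  p != q -> exists a b, [/\ a \in M, b \in M, a \in H & b \notin H].
Proof.
move=> [_ HM] pM qM pq.
have out x : x \notin M -> x \in [set: T] :\: M by rewrite !inE andbT.
have phi_in a b : a \in M -> b \in M -> a != b -> a \in H -> b \in H -> L a b ->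
    phi a \in M.
  move=> aM bM ab aH bH Lab; apply: contraT => /out/HM[Hall | Hall].
  - have := Hall b bM; rewrite e_sym half_adj // => Lba.
    by move: ab; rewrite (antiL aH bH) ?Lab ?Lba ?eqxx.
  - by have := Hall a aM; rewrite e_sym half_adj // reflL.
have pre_in w w' : w \in H -> w' \in H -> phi w \in M -> phi w' \in M -> w != w' ->
    L w w' -> w' \in M.
  move=> wH w'H pwM pw'M ww' Lww'; apply: contraT => /out/HM[Hall | Hall].
  - have := Hall _ pwM; rewrite half_adj // => Lw'w.
    by move: ww'; rewrite (antiL wH w'H) ?Lww' ?Lw'w ?eqxx.
  - by have := Hall _ pw'M; rewrite half_adj // reflL.
have [pH | pH] := boolP (p \in H); have [qH | qH] := boolP (q \in H).
- case/orP: (totL pH qH) => Lpq.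
  + by exists p, (phi p); rewrite (phi_in p q) ?half_phi_notin.
  + by exists q, (phi q); rewrite (phi_in q p) ?half_phi_notin // eq_sym.
- by exists p, q.
- by exists q, p.
- have [w wH Ew] := half_onto pH; have [w' w'H Ew'] := half_onto qH.
  have ww' : w != w' by apply: contraNneq pq => E; rewrite -Ew -Ew' E.
  case/orP: (totL wH w'H) => Lww'.
  + by exists w', q; rewrite (pre_in w w') ?Ew ?Ew'.
  + by exists w, p; rewrite (pre_in w' w) ?Ew ?Ew' // eq_sym.
Qed.

Hypothesis T4 : 4 <= #|T|.

Lemma half_prime : prime_on e [set: T].
Proof.
split=> [|M modM]; first by rewrite cardsT ltnW.
apply: NNPP => nT.
have [M0 MS M1] : [/\ M != set0, M != [set: T] & #|M| != 1].
  by split; apply/eqP => E; apply: nT; rewrite /trivial_module_on E;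
    [left | right; left | right; right].
have /card_gt1P[p [q [pM qM pq]]] : 1 < #|M|.
  by rewrite ltn_neqAle eq_sym M1 card_gt0 M0.
have [a [b [aM bM aH bH]]] := half_module_both_sides modM pM qM pq.
suff cl r s : r \in M -> e r s -> s \in M by rewrite (half_connected cl M0) eqxx in MS.
move=> rM ers; apply: contraT => sM.
have : s \in [set: T] :\: M by rewrite !inE sM.
case/modM.2 => [Hall | Hall]; last by move: (Hall r rM); rewrite e_sym ers.
move: (half_bip (Hall a aM)) (half_bip (Hall b bM)).
by rewrite aH (negbTE bH); case: (s \in H).
Qed.

Let card_delete_gt1 v : 1 < #|[set: T] :\ v|.
Proof. by move: T4; rewrite -cardsT (cardsD1 v) in_setT add1n ltnS; apply: ltnW. Qed.

Lemma half_delete_H v : v \in H -> ~ prime_on e ([set: T] :\ v).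
Proof.
move=> vH; case: (linear_order_pred ordL vH) => [vmin | [p [pH pv Lpv Hp]]].
  have pvS : phi v \in [set: T] :\ v.
    by rewrite !inE andbT; apply: contraNneq (half_phi_notin vH) => ->.
  apply: (isolated_not_prime pvS (card_delete_gt1 v)) => s.
  rewrite !inE andbT => sv; apply/negP => eps.
  have sH : s \in H.
    by move: (half_bip eps); rewrite (negbTE (half_phi_notin vH)); case: (s \in H).
  move: eps; rewrite e_sym half_adj // => Lsv.
  by move: sv; rewrite (antiL sH vH) ?eqxx // Lsv vmin.
move=> P; apply: (prime_no_twins (a := phi p) (b := phi v) P).
- by rewrite !inE andbT; apply: contraNneq (half_phi_notin pH) => ->.
- by rewrite !inE andbT; apply: contraNneq (half_phi_notin vH) => ->.
- by apply: contra pv => /eqP/(phi_inj pH vH) ->.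
move=> c; rewrite !inE andbT => cv _ _.
have [cH | cH] := boolP (c \in H).
  rewrite !(e_sym _ c) !half_adj //; apply/idP/idP => Lc; first exact: transL Lc Lpv.
  exact: Hp.
have nf x : x \in H -> e (phi x) c = false.
  by move=> xH; apply/negP => /half_bip; rewrite (negbTE (half_phi_notin xH)) (negbTE cH).
by rewrite !nf.
Qed.

Lemma half_delete_phi w : w \in H -> ~ prime_on e ([set: T] :\ phi w).
Proof.
move=> wH; have pww : phi w != w by apply: contraNneq (half_phi_notin wH) => ->.
case: (linear_order_pred (linear_order_dual ordL) wH) => /= [wmax | [s [sH sw Lws Hs]]].
  have wS : w \in [set: T] :\ phi w by rewrite !inE eq_sym pww.
  apply: (isolated_not_prime wS (card_delete_gt1 (phi w))) => y.
  rewrite !inE andbT => ypw; apply/negP => ewy.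
  have yH : y \notin H by move: (half_bip ewy); rewrite wH; case: (y \in H).
  have [z zH Ez] := half_onto yH; move: ewy; rewrite -Ez half_adj // => Lwz.
  by move: ypw; rewrite -Ez (antiL wH zH) ?Lwz ?wmax ?eqxx.
move=> P; apply: (prime_no_twins (a := w) (b := s) P).
- by rewrite !inE eq_sym pww.
- by rewrite !inE andbT; apply: contraNneq (half_phi_notin wH) => <-.
- by rewrite eq_sym.
move=> c; rewrite !inE andbT => cpw _ _.
have [cH | cH] := boolP (c \in H).
  have nf x : x \in H -> e x c = false.
    by move=> xH; apply/negP => /half_bip; rewrite xH cH.
  by rewrite !nf.
have [z zH Ez] := half_onto cH; rewrite -Ez in cpw *.
have zw : z != w by apply: contraNneq cpw => ->.
rewrite !half_adj //; apply/idP/idP => Lz; first exact: Hs.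
exact: transL Lws Lz.
Qed.

Lemma half_delete v : ~ prime_on e ([set: T] :\ v).
Proof.
have [vH | vH] := boolP (v \in H); first exact: half_delete_H.
by have [w wH <-] := half_onto vH; apply: half_delete_phi.
Qed.

End HalfGraph.

End Graph.

Theorem proposition5p1 (T : finType) (e : rel T) :
  simple_graph e -> bipartite e -> 4 <= #|T| ->
  [/\ ((~ contains_P5 e /\ prime_graph e) <-> critical e),
      (critical e <-> half_graph e) &
      ((~ contains_P5 e /\ prime_graph e) <-> half_graph e)].
Proof.
move=> [e_sym e_irr] [X e_bip] T4.
have half_props : half_graph e -> [/\ ~ contains_P5 e, prime_graph e & critical e].
  case=> H [L [phi [ordL [phi_inj [phiH [phi_onto half_edge]]]]]].
  have PT := half_prime e_sym ordL phi_inj phiH phi_onto half_edge T4.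
  split=> //; last by split=> // v; apply: (half_delete e_sym ordL phi_inj phiH phi_onto).
  apply: (nested_P5_free (half_bip phiH half_edge)).
  exact: (half_nested e_sym ordL phi_inj phiH phi_onto half_edge).
have P5_free_half : ~ contains_P5 e /\ prime_graph e -> half_graph e.
  case=> NP PT; apply: (prime_nested_half e_sym e_bip PT).
  exact: (P5_free_nested e_sym e_irr e_bip PT NP).
have critical_half : critical e -> half_graph e.
  case=> PT Ndel; apply: (prime_nested_half e_sym e_bip PT).
  by apply: (critical_nested e_sym e_irr e_bip); split=> // v _; apply: Ndel.
split; split.
- by move/P5_free_half/half_props => [].
- by move/critical_half/half_props => [].
- exact: critical_half.
- by move/half_props => [].
- exact: P5_free_half.
- by move/half_props => [].
Qed.
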